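(* Let $\Omega^{+}_{\mathrm{even}}$ (resp. $\Omega^-_{\mathrm{even}}$) be the set of $(b,a,c,|\xi|)\in R$ for which \[ 2\lambda_{\mathrm{even}}[a+c-(b+1)\beta^2]=5\beta(\beta-\lambda_{\mathrm{even}})(\lambda_{\mathrm{even}}-\beta b),\qquad \lambda_{\mathrm{even}}=\frac{5\beta(ab+c-2\beta^2b)}{a+c-(b+1)\beta^2}, \] holds with $\beta=\sqrt{\big(ab+c\pm\sqrt{(c-ab)^2+4|\xi|^2b}\big)/(2b)}$, the sign $+$ (resp. $-$) being used. Then $\Omega^\pm_{\mathrm{even}}$ are non-empty and unbounded, and if $(b,a,c,|\xi|)\in\Omega^\pm_{\mathrm{even}}$ then $(b,ra,rc,r|\xi|)\in\Omega^\pm_{\mathrm{even}}$ for every $r>0$.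
   Context: $R:=\{(b,a,c,|\xi|)\in\mathbb{R}^4: a,c>0,\ b\ge 1,\ 0\le|\xi|^2<ac\}$ parametrizes pairs $A=\begin{pmatrix}a&\xi\\\overline\xi&c\end{pmatrix}$, $B=\begin{pmatrix}1&0\\0&b\end{pmatrix}$ of positive definite matrices. Points considered are those for which the quantities above are defined (in particular $b>1$, $|\xi|>0$). *)

From Stdlib Require Import Reals.
Open Scope R_scope.

Definition in_region (b a c x : R) : Prop :=
  0 < a /\ 0 < c /\ 1 <= b /\ 0 <= x /\ x ^ 2 < a * c.

Definition beta_pm (pm : bool) (b a c x : R) : R :=
  let s := sqrt ((c - a * b) ^ 2 + 4 * x ^ 2 * b) in
  sqrt ((a * b + c + (if pm then s else - s)) / (2 * b)).

Definition denom_even (pm : bool) (b a c x : R) : R :=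
  a + c - (b + 1) * (beta_pm pm b a c x) ^ 2.

Definition lambda_even (pm : bool) (b a c x : R) : R :=
  let be := beta_pm pm b a c x in
  5 * be * (a * b + c - 2 * be ^ 2 * b) / denom_even pm b a c x.

(* Omega^{+/-}_even: points of the region where all quantities are defined
   (b > 1, |xi| > 0, denominator nonzero) and the equation holds. *)
Definition Omega_even (pm : bool) (b a c x : R) : Prop :=
  in_region b a c x /\ 1 < b /\ 0 < x /\ denom_even pm b a c x <> 0 /\
  let be := beta_pm pm b a c x in
  let la := lambda_even pm b a c x in
  2 * la * denom_even pm b a c x = 5 * be * (be - la) * (la - be * b).

From Stdlib Require Import Reals Lra Psatz.
Open Scope R_scope.

(* Scaling (a, c, |xi|) by r > 0 scales beta and lambda by sqrt r and the
   denominator a + c - (b + 1) beta^2 by r, so both sides of the defining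
   equation pick up the same factor r sqrt r.  Hence Omega^{+/-}_even is a
   union of rays, and one explicit point per sign (with beta = 1) gives
   non-emptiness and, along its ray, unboundedness. *)

Lemma sqrt_eq_sqr (u v : R) : 0 <= v -> u = v ^ 2 -> sqrt u = v.
Proof. intros Hv ->; now apply sqrt_pow2. Qed.

Section Scaling.

Variables (pm : bool) (b a c x r : R).
Hypotheses (Hb : 0 < b) (Hr : 0 < r).

Let sqrt_r_sqr : sqrt r ^ 2 = r.
Proof. rewrite <- Rsqr_pow2; apply Rsqr_sqrt; lra. Qed.

Lemma beta_pm_scale :
  beta_pm pm b (r * a) (r * c) (r * x) = sqrt r * beta_pm pm b a c x.
Proof.
  unfold beta_pm.
  set (s := sqrt ((c - a * b) ^ 2 + 4 * x ^ 2 * b)).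
  assert (Hs : sqrt ((r * c - r * a * b) ^ 2 + 4 * (r * x) ^ 2 * b) = r * s).
  { replace ((r * c - r * a * b) ^ 2 + 4 * (r * x) ^ 2 * b)
      with (r ^ 2 * ((c - a * b) ^ 2 + 4 * x ^ 2 * b)) by ring.
    rewrite sqrt_mult_alt, sqrt_pow2 by (apply pow2_ge_0 || lra).
    reflexivity. }
  rewrite Hs, <- sqrt_mult_alt by lra.
  f_equal; destruct pm; field; lra.
Qed.

Lemma denom_even_scale :
  denom_even pm b (r * a) (r * c) (r * x) = r * denom_even pm b a c x.
Proof.
  unfold denom_even; rewrite beta_pm_scale, Rpow_mult_distr, sqrt_r_sqr.
  ring.
Qed.

Lemma lambda_even_scale :
  denom_even pm b a c x <> 0 ->
  lambda_even pm b (r * a) (r * c) (r * x) = sqrt r * lambda_even pm b a c x.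
Proof.
  intro HD; unfold lambda_even; cbv zeta.
  rewrite denom_even_scale, beta_pm_scale, Rpow_mult_distr, sqrt_r_sqr.
  field; lra.
Qed.

Lemma in_region_scale :
  in_region b a c x -> in_region b (r * a) (r * c) (r * x).
Proof.
  intros (Ha & Hc & Hb1 & Hx0 & Hx).
  repeat split; try nra.
  replace ((r * x) ^ 2) with (r ^ 2 * x ^ 2) by ring.
  replace (r * a * (r * c)) with (r ^ 2 * (a * c)) by ring.
  apply Rmult_lt_compat_l; nra.
Qed.

End Scaling.

Lemma Omega_even_scale pm b a c x r :
  Omega_even pm b a c x -> 0 < r -> Omega_even pm b (r * a) (r * c) (r * x).
Proof.
  intros (Hreg & Hb & Hx & HD & Heq) Hr.
  assert (Hq : 0 < sqrt r) by (apply sqrt_lt_R0; lra).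
  split; [apply in_region_scale; assumption || lra|].
  split; [lra|]; split; [nra|].
  cbv zeta in *.
  rewrite denom_even_scale, lambda_even_scale, beta_pm_scale by lra.
  split; [now apply Rmult_integral_contrapositive; split; lra|].
  set (be := beta_pm pm b a c x) in *.
  set (la := lambda_even pm b a c x) in *.
  set (D := denom_even pm b a c x) in *.
  transitivity (r * sqrt r * (2 * la * D)); [ring|].
  rewrite Heq, <- (sqrt_sqrt r) at 1 by lra.
  ring.
Qed.

(* At b = 6 both points are chosen so that beta = 1, which turns the
   defining equation into a rational identity. *)
Lemma Omega_even_nonempty pm : exists b a c x, Omega_even pm b a c x.
Proof.
  destruct pm.
  - exists 6, (27/40), (123/40), (39/40).
    assert (Hbeta : beta_pm true 6 (27/40) (123/40) (39/40) = 1).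
    { unfold beta_pm; rewrite (sqrt_eq_sqr (_ ^ 2 + _) (39/8)) by (simpl; lra || field).
      apply sqrt_eq_sqr; simpl; lra || field. }
    unfold Omega_even, lambda_even, denom_even; cbv zeta; rewrite Hbeta.
    repeat split; try lra; field.
  - exists 6, (449/440), (3081/440), (63/440).
    assert (Hbeta : beta_pm false 6 (449/440) (3081/440) (63/440) = 1).
    { unfold beta_pm; rewrite (sqrt_eq_sqr (_ ^ 2 + _) (9/8)) by (simpl; lra || field).
      apply sqrt_eq_sqr; simpl; lra || field. }
    unfold Omega_even, lambda_even, denom_even; cbv zeta; rewrite Hbeta.
    repeat split; try lra; field.
Qed.

Lemma le_sqrt_sum_sqr b a c x : 0 <= a -> a <= sqrt (b ^ 2 + a ^ 2 + c ^ 2 + x ^ 2).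
Proof.
  intro Ha; rewrite <- (sqrt_pow2 a) at 1 by lra.
  apply sqrt_le_1_alt; nra.
Qed.

Lemma Omega_even_unbounded pm M : exists b a c x,
  Omega_even pm b a c x /\ M < sqrt (b ^ 2 + a ^ 2 + c ^ 2 + x ^ 2).
Proof.
  destruct (Omega_even_nonempty pm) as (b & a & c & x & H).
  assert (Ha : 0 < a) by (destruct H as [[? _] _]; lra).
  pose proof (Rle_abs M); pose proof (Rabs_pos M).
  set (r := (Rabs M + 1) / a).
  assert (Hr : 0 < r) by (apply Rdiv_lt_0_compat; lra).
  assert (Hra : r * a = Rabs M + 1) by (unfold r; field; lra).
  exists b, (r * a), (r * c), (r * x); split; [now apply Omega_even_scale|].
  apply Rlt_le_trans with (r * a); [lra|].
  apply le_sqrt_sum_sqr; lra.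
Qed.

Theorem mainTheorem8 : forall pm : bool,
  (exists b a c x, Omega_even pm b a c x) /\
  (forall M : R, exists b a c x, Omega_even pm b a c x /\
       M < sqrt (b ^ 2 + a ^ 2 + c ^ 2 + x ^ 2)) /\
  (forall b a c x r, Omega_even pm b a c x -> 0 < r ->
       Omega_even pm b (r * a) (r * c) (r * x)).
Proof.
  intro pm; split; [|split].
  - apply Omega_even_nonempty.
  - apply Omega_even_unbounded.
  - intros; now apply Omega_even_scale.
Qed.
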